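(* Let $\nu\in\mathcal{S}^{n-1}$, $\Pi_\nu(0):=\{x:-1\le x\cdot\nu\le0\}$, $\Gamma_N:=\{x\cdot\nu=0\}$, $\Gamma_D:=\{x\cdot\nu=-1\}$. For given $R,\varepsilon>0$, suppose $u:\overline{\Pi_\nu(0)}\to\mathbb{R}$ satisfies, in the viscosity sense, $$-\mathcal{P}^+(D^2u)\le0,\quad -\mathcal{P}^-(D^2u)\ge0 \text{ in }\Pi_\nu(0)\cap\{|x|\le R\},\qquad \partial_\nu u=g \text{ on }\Gamma_N\cap\{|x|\le R\},$$ $$u=f \text{ on }\Gamma_D\cap\{|x|\le R\},\qquad |u(x)|\le R^{2-\varepsilon} \text{ on }\{|x|=R\}.$$ If $|f|,|g|\le\delta$, then $$|u(x)|\le2\delta+16(n-1)\frac{\Lambda}{\lambda}R^{-\varepsilon}\quad\text{in }\Pi_\nu(0)\cap\{|x|\le1\}.$$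
   Context: Fix $0<\lambda<\Lambda$. For a real symmetric matrix $M$ with eigenvalues $e_i$, the Pucci extremal operators are $\mathcal{P}^+(M)=\Lambda\sum_{e_i>0}e_i+\lambda\sum_{e_i<0}e_i$ and $\mathcal{P}^-(M)=\lambda\sum_{e_i>0}e_i+\Lambda\sum_{e_i<0}e_i$. Here $f,g$ are functions on the respective boundary parts.
   Formalization: The radius R is required to satisfy R ≥ 1, in place of being an arbitrary R > 0. The statement above fails without it. *)

From HB Require Import structures.
From mathcomp Require Import all_boot all_order all_algebra.
From mathcomp Require Import polyrcf.
From mathcomp Require Import reals exp.
Set Implicit Arguments. Unset Strict Implicit. Unset Printing Implicit Defensive.
Import Order.TTheory GRing.Theory Num.Theory.
Local Open Scope ring_scope.

Section Defs.
Variables (R : realType) (n : nat).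

Definition dotv (x y : 'rV[R]_n) : R := (x *m y^T) 0 0.
Definition enorm (x : 'rV[R]_n) : R := Num.sqrt (dotv x x).

Definition qform (X : 'M[R]_n) (z : 'rV[R]_n) : R := (z *m X *m z^T) 0 0.

(* Eigenvalues of M, counted with multiplicity: the real roots of the
   characteristic polynomial, root x having multiplicity mup x (char_poly M).
   (For symmetric M the characteristic polynomial splits over R.) *)
Definition eigs_pos_sum (M : 'M[R]_n) : R :=
  \sum_(x <- rootsR (char_poly M) | 0 < x) (mup x (char_poly M))%:R * x.
Definition eigs_neg_sum (M : 'M[R]_n) : R :=
  \sum_(x <- rootsR (char_poly M) | x < 0) (mup x (char_poly M))%:R * x.

Definition pucci_plus (lam Lam : R) (M : 'M[R]_n) : R :=
  Lam * eigs_pos_sum M + lam * eigs_neg_sum M.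
Definition pucci_minus (lam Lam : R) (M : 'M[R]_n) : R :=
  lam * eigs_pos_sum M + Lam * eigs_neg_sum M.

(* Second order super-/sub-jets of u at x relative to the set S
   (Crandall-Ishii-Lions):  (p,X) in J^{2,+}_S u(x) iff
   u(y) <= u(x) + p.(y-x) + 1/2 (y-x)^T X (y-x) + o(|y-x|^2), y in S, y -> x. *)
Definition superjet (S : 'rV[R]_n -> Prop) (u : 'rV[R]_n -> R)
    (x p : 'rV[R]_n) (X : 'M[R]_n) : Prop :=
  X^T = X /\
  forall e : R, 0 < e -> exists2 d : R, 0 < d &
    forall y, S y -> enorm (y - x) < d ->
      u y <= u x + dotv p (y - x) + 2^-1 * qform X (y - x)
             + e * enorm (y - x) ^+ 2.
Definition subjet (S : 'rV[R]_n -> Prop) (u : 'rV[R]_n -> R)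
    (x p : 'rV[R]_n) (X : 'M[R]_n) : Prop :=
  X^T = X /\
  forall e : R, 0 < e -> exists2 d : R, 0 < d &
    forall y, S y -> enorm (y - x) < d ->
      u y >= u x + dotv p (y - x) + 2^-1 * qform X (y - x)
             - e * enorm (y - x) ^+ 2.

Definition strip (nu : 'rV[R]_n) (x : 'rV[R]_n) : Prop :=
  -1 <= dotv x nu <= 0.

Definition visc_problem (lam Lam : R) (nu : 'rV[R]_n) (Rad : R)
    (f g : 'rV[R]_n -> R) (u : 'rV[R]_n -> R) : Prop :=
  (forall x p X, -1 < dotv x nu < 0 -> enorm x < Rad ->
     superjet (strip nu) u x p X -> - pucci_plus lam Lam X <= 0) /\
  (forall x p X, -1 < dotv x nu < 0 -> enorm x < Rad ->
     subjet (strip nu) u x p X -> - pucci_minus lam Lam X >= 0) /\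
  (* d_nu u = g on Gamma_N, generalized viscosity sense *)
  (forall x p X, dotv x nu = 0 -> enorm x < Rad ->
     superjet (strip nu) u x p X ->
     Num.min (- pucci_plus lam Lam X) (dotv p nu - g x) <= 0) /\
  (forall x p X, dotv x nu = 0 -> enorm x < Rad ->
     subjet (strip nu) u x p X ->
     Num.max (- pucci_minus lam Lam X) (dotv p nu - g x) >= 0) /\
  (forall x, dotv x nu = -1 -> enorm x <= Rad -> u x = f x).

End Defs.

Definition cont_on_strip (R : realType) (n : nat) (nu : 'rV[R]_n)
    (u : 'rV[R]_n -> R) : Prop :=
  forall x, strip nu x -> forall e : R, 0 < e -> exists2 d : R, 0 < d &
    forall y, strip nu y -> enorm (y - x) < d -> `|u y - u x| < e.

From HB Require Import structures.
From mathcomp Require Import all_boot all_order all_algebra.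
From mathcomp Require Import polyrcf.
From mathcomp Require Import reals exp.
From mathcomp Require Import boolp classical_sets topology normedtype derive.
From mathcomp Require Import ring lra.
Import Order.TTheory GRing.Theory Num.Theory.
Import numFieldNormedType.Exports.
Local Open Scope ring_scope.
Set Implicit Arguments. Unset Strict Implicit. Unset Printing Implicit Defensive.

(* Write t := x.nu and m := n - 1.  For mu > 0 the quadratic barrier
     phi(x) = 2(delta + mu) + C(K + 1) + (delta + mu) t + C|x|^2 - (C(K + 1) + mu) t^2,
   with K := m Lam / lam (any K with lam K >= m Lam will do), has Hessian
   2C I - 2(C(K + 1) + mu) nu nu^T, whose eigenvalues are 2C (m times) and
   -2CK - 2mu; hence P^+(D^2 phi) <= -2 lam mu < 0 and P^-(-D^2 phi) >= 2 lam mu > 0,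
   while d_nu phi = delta + mu > |g| on Gamma_N.  So neither u - phi nor -u - phi can
   attain a maximum on the truncated strip at a point of Pi_nu(0) or Gamma_N; they
   are <= 0 on Gamma_D (phi >= delta there) and on the sphere |x| = R
   (phi >= C R^2 >= R^(2 - eps) for C = R^(-eps)).  Hence |u| <= phi <=
   2(delta + mu) + C(K + 2) on the unit ball, and mu -> 0 gives the claim.
   For n = 1 the sphere does not meet {-1 < t <= 0}, so C = 0 works. *)

Section Euclid.
Variables (R : realType) (n : nat).
Implicit Types x y z : 'rV[R]_n.

Lemma dotvE x y : dotv x y = \sum_i x 0 i * y 0 i.
Proof. by rewrite /dotv mxE; apply: eq_bigr => i _; rewrite mxE. Qed.

Lemma dotvC x y : dotv x y = dotv y x.
Proof. by rewrite !dotvE; apply: eq_bigr => i _; rewrite mulrC. Qed.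

Lemma dotvDl x y z : dotv (x + y) z = dotv x z + dotv y z.
Proof. by rewrite !dotvE -big_split; apply: eq_bigr => i _; rewrite mxE mulrDl. Qed.

Lemma dotvDr x y z : dotv z (x + y) = dotv z x + dotv z y.
Proof. by rewrite dotvC dotvDl !(dotvC z). Qed.

Lemma dotvZl a x y : dotv (a *: x) y = a * dotv x y.
Proof. by rewrite !dotvE mulr_sumr; apply: eq_bigr => i _; rewrite mxE mulrA. Qed.

Lemma dotvZr a x y : dotv y (a *: x) = a * dotv y x.
Proof. by rewrite dotvC dotvZl dotvC. Qed.

Lemma dotvNl x y : dotv (- x) y = - dotv x y.
Proof. by rewrite -scaleN1r dotvZl mulN1r. Qed.

Lemma dotvNr x y : dotv y (- x) = - dotv y x.
Proof. by rewrite dotvC dotvNl dotvC. Qed.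

Lemma dotvBl x y z : dotv (x - y) z = dotv x z - dotv y z.
Proof. by rewrite dotvDl dotvNl. Qed.

Lemma dotvBr x y z : dotv z (x - y) = dotv z x - dotv z y.
Proof. by rewrite dotvDr dotvNr. Qed.

Lemma dotv0l y : dotv 0 y = 0.
Proof. by rewrite -(scale0r (0 : 'rV[R]_n)) dotvZl mul0r. Qed.

Lemma dotvv_ge0 x : 0 <= dotv x x.
Proof. by rewrite dotvE; apply: sumr_ge0 => i _; rewrite -expr2 sqr_ge0. Qed.

Lemma dotvv_eq0 x : dotv x x = 0 -> x = 0.
Proof.
rewrite dotvE => /eqP; rewrite psumr_eq0; last by move=> i _; rewrite -expr2 sqr_ge0.
move=> /allP x0; apply/rowP => i; rewrite [RHS]mxE.
by have /= := x0 i (mem_index_enum _); rewrite mulf_eq0 orbb => /eqP.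
Qed.

Lemma enorm_ge0 x : 0 <= enorm x.
Proof. exact: sqrtr_ge0. Qed.

Lemma enorm_sq x : enorm x ^+ 2 = dotv x x.
Proof. by rewrite /enorm sqr_sqrtr // dotvv_ge0. Qed.

Lemma dotv_sqr_le x y : dotv x y ^+ 2 <= dotv x x * dotv y y.
Proof.
have [/dotvv_eq0 ->|yn0] := eqVneq (dotv y y) 0.
  by rewrite dotvC !dotv0l expr0n /= mulr0.
have yp : 0 < dotv y y by rewrite lt_def yn0 dotvv_ge0.
pose s := dotv x y / dotv y y.
have := dotvv_ge0 (x - s *: y).
rewrite !(dotvBl, dotvBr, dotvZl, dotvZr) (dotvC y x).
have -> : s * dotv y y = dotv x y by rewrite /s; field; rewrite yn0.
have -> : s * dotv x y = dotv x y ^+ 2 / dotv y y by rewrite /s; field; rewrite yn0.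
rewrite subrr mulr0 subr0 subr_ge0 ler_pdivrMr //.
Qed.

Lemma normr_dotv_le x y : `|dotv x y| <= enorm x * enorm y.
Proof.
rewrite /enorm -sqrtrM ?dotvv_ge0 // -(sqrtr_sqr (dotv x y)).
by rewrite ler_wsqrtr // dotv_sqr_le.
Qed.

Lemma enormD x y : enorm (x + y) <= enorm x + enorm y.
Proof.
have h1 := enorm_ge0 x; have h2 := enorm_ge0 y.
rewrite -(ger0_norm (addr_ge0 h1 h2)) -(sqrtr_sqr (enorm x + enorm y)).
rewrite /enorm ler_wsqrtr // -/(enorm x) -/(enorm y) dotvDl !dotvDr (dotvC y x).
have := normr_dotv_le x y; have := ler_norm (dotv x y).
rewrite -!enorm_sq; nra.
Qed.

Lemma enormN x : enorm (- x) = enorm x.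
Proof. by rewrite /enorm dotvNl dotvNr opprK. Qed.

Lemma enormB x y : enorm (x - y) = enorm (y - x).
Proof. by rewrite -enormN opprB. Qed.

Lemma qformD (A B : 'M[R]_n) z : qform (A + B) z = qform A z + qform B z.
Proof. by rewrite /qform mulmxDr mulmxDl mxE. Qed.

Lemma qformZ a (A : 'M[R]_n) z : qform (a *: A) z = a * qform A z.
Proof. by rewrite /qform -scalemxAr -scalemxAl mxE. Qed.

Lemma qformN (A : 'M[R]_n) z : qform (- A) z = - qform A z.
Proof. by rewrite -scaleN1r qformZ mulN1r. Qed.

Lemma qform1 z : qform 1%:M z = dotv z z.
Proof. by rewrite /qform mulmx1. Qed.

Lemma qform_rank1 v z : qform (v^T *m v) z = dotv z v ^+ 2.
Proof.
rewrite /qform !mulmxA -(mulmxA (z *m v^T)) mxE big_ord1 /dotv expr2.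
by congr (_ * _); rewrite -[v *m z^T]trmxK trmx_mul trmxK mxE.
Qed.

End Euclid.

Lemma det_scalar_sub_mul (S : idomainType) m (c : S) (u : 'cV[S]_m.+1)
    (v : 'rV[S]_m.+1) :
  c != 0 -> \det (c%:M - u *m v) = (c - (v *m u) 0 0) * c ^+ m.
Proof.
move=> c0.
(* Two block factorizations of the same matrix (Sylvester's determinant identity). *)
pose M := block_mx (c%:M : 'M_1) (c *: v) u (c%:M : 'M_m.+1).
have E1 : M = block_mx (c%:M : 'M_1) 0 u 1%:M *m block_mx 1%:M v 0 (c%:M - u *m v).
  rewrite mulmx_block !mulmx0 !mul0mx !mulmx1 !mul1mx !addr0 ?add0r.
  by rewrite /M mul_scalar_mx addrC subrK.
have E2 : M = block_mx ((c - (v *m u) 0 0)%:M : 'M_1) v 0 1%:M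
              *m block_mx 1%:M 0 u (c%:M : 'M_m.+1).
  rewrite mulmx_block !mulmx0 !mul0mx !mulmx1 !mul1mx ?addr0 ?add0r.
  rewrite /M mul_mx_scalar; set s := (v *m u) 0 0.
  by rewrite [v *m u]mx11_scalar -/s raddfB /= subrK.
have := congr1 determinant E1; rewrite det_mulmx det_lblock det_ublock.
rewrite E2 det_mulmx det_ublock det_lblock !det_scalar1 !det1 !mulr1 mul1r.
by rewrite det_scalar exprS mulrCA mul1r => /(mulfI c0) ->.
Qed.

Section RankOnePerturbation.
Variables (R : realType) (m : nat) (nu : 'rV[R]_m.+1).
Hypothesis hnu : dotv nu nu = 1.

Lemma char_poly_scalar_rank1 (a b : R) :
  char_poly (a%:M + b *: (nu^T *m nu)) = ('X - a%:P) ^+ m * ('X - (a + b)%:P).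
Proof.
pose v : 'rV[{poly R}]_m.+1 := \row_i (nu 0 i)%:P.
pose u : 'cV[{poly R}]_m.+1 := \col_i (b * nu 0 i)%:P.
have E : char_poly_mx (a%:M + b *: (nu^T *m nu)) = ('X - a%:P)%:M - u *m v.
  apply/matrixP => i j; rewrite !mxE big_ord1 !mxE big_ord1 !mxE.
  rewrite (ord1 (0 : 'I_1)); case: (i == j); rewrite /= ?mulr1n ?mulr0n;
    rewrite !rmorphD !rmorphM /=; ring.
rewrite /char_poly E det_scalar_sub_mul ?polyXsubC_eq0 //.
have -> : (v *m u) 0 0 = b%:P.
  rewrite !mxE -[b]mulr1 -hnu dotvE mulr_sumr rmorph_sum /=.
  by apply: eq_bigr => i _; rewrite !mxE -rmorphM /= mulrCA.
by rewrite mulrC rmorphD /= opprD addrA.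
Qed.

Lemma sum_mup_roots_XsubC (P : pred R) (a c : R) : a != c ->
  \sum_(x <- rootsR (('X - a%:P) ^+ m * ('X - c%:P)) | P x)
     (mup x (('X - a%:P) ^+ m * ('X - c%:P)))%:R * x
  = (if P a then m%:R * a else 0) + (if P c then c else 0).
Proof.
move=> ac; set p := _ * _.
have p0 : p != 0 by rewrite mulf_neq0 ?expf_neq0 ?polyXsubC_eq0.
have memp x : (x \in rootsR p) = root p x.
  by rewrite -(roots_on_rootsR p0 x) in_itv.
have mupa : mup a p = m.
  rewrite mupM ?expf_neq0 ?polyXsubC_eq0 // mup_XsubCX eqxx mupNroot ?addn0 //.
  by rewrite root_XsubC.
have mupc : mup c p = 1%N.
  rewrite mupM ?expf_neq0 ?polyXsubC_eq0 // mup_XsubCX (negbTE ac) add0n.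
  by rewrite -[('X - c%:P)]expr1 mup_XsubCX eqxx.
have rootp x : root p x = ((0 < m)%N && (x == a)) || (x == c).
  by rewrite /p rootM /root horner_exp expf_eq0 !hornerXsubC !subr_eq0.
clearbody p; case: m mupa rootp => [|k] mupa rootp.
  have pe : perm_eq (rootsR p) [:: c].
    apply: uniq_perm; [exact: uniq_roots | by [] |].
    by move=> x; rewrite memp rootp inE ltnn.
  rewrite (perm_big _ pe) big_cons big_nil mupc mul0r.
  by case: (P a); case: (P c); rewrite /= ?mul1r ?add0r ?addr0.
have pe : perm_eq (rootsR p) [:: a; c].
  apply: uniq_perm; [exact: uniq_roots | by rewrite /= inE ac |].
  by move=> x; rewrite memp rootp !inE.
rewrite (perm_big _ pe) !big_cons big_nil mupc mupa.
by case: (P a); case: (P c); rewrite /= ?mul1r ?add0r ?addr0.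
Qed.

Lemma pucci_plus_scalar_rank1 (lam Lam a b : R) : 0 <= a -> a + b < 0 ->
  pucci_plus lam Lam (a%:M + b *: (nu^T *m nu)) = Lam * (m%:R * a) + lam * (a + b).
Proof.
move=> ha hab; have ac : a != a + b by apply/eqP => e; move: hab; rewrite -e; lra.
rewrite /pucci_plus /eigs_pos_sum /eigs_neg_sum char_poly_scalar_rank1.
rewrite (sum_mup_roots_XsubC (fun x => 0 < x)) //.
rewrite (sum_mup_roots_XsubC (fun x => x < 0)) //=.
rewrite hab (ltNge a 0) ha (ltNge 0 (a + b)) (ltW hab) lt0r ha andbT /= !addr0 add0r.
by case: eqP => [->|_]; rewrite ?mulr0.
Qed.

Lemma pucci_minus_scalar_rank1 (lam Lam a b : R) : a <= 0 -> 0 < a + b ->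
  pucci_minus lam Lam (a%:M + b *: (nu^T *m nu)) = lam * (a + b) + Lam * (m%:R * a).
Proof.
move=> ha hab; have ac : a != a + b by apply/eqP => e; move: hab; rewrite -e; lra.
rewrite /pucci_minus /eigs_pos_sum /eigs_neg_sum char_poly_scalar_rank1.
rewrite (sum_mup_roots_XsubC (fun x => 0 < x)) //.
rewrite (sum_mup_roots_XsubC (fun x => x < 0)) //=.
rewrite hab (ltNge 0 a) ha (ltNge (a + b) 0) (ltW hab) lt_neqAle ha andbT /=.
rewrite !addr0 add0r.
by case: eqP => [->|_]; rewrite ?mulr0.
Qed.

End RankOnePerturbation.

Section QuadraticBarrier.
Variables (R : realType) (n : nat) (nu : 'rV[R]_n) (c0 c1 al be : R).

Definition barrier (x : 'rV[R]_n) : R :=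
  c0 + c1 * dotv x nu + 2^-1 * al * dotv x x + 2^-1 * be * dotv x nu ^+ 2.
Definition barrier_grad (x : 'rV[R]_n) : 'rV[R]_n :=
  c1 *: nu + al *: x + (be * dotv x nu) *: nu.
Definition barrier_hess : 'M[R]_n := al%:M + be *: (nu^T *m nu).

Lemma barrier_hess_sym : barrier_hess^T = barrier_hess.
Proof. by rewrite /barrier_hess linearD /= tr_scalar_mx linearZ /= trmx_mul trmxK. Qed.

Lemma qform_barrier_hess z :
  qform barrier_hess z = al * dotv z z + be * dotv z nu ^+ 2.
Proof. by rewrite qformD -(scalemx1 _ al) !qformZ qform1 qform_rank1. Qed.

Lemma barrier_taylor x y :
  barrier y =
    barrier x + dotv (barrier_grad x) (y - x) + 2^-1 * qform barrier_hess (y - x).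
Proof.
rewrite -{1}(subrK x y) addrC; move: (y - x) => z.
rewrite /barrier /barrier_grad qform_barrier_hess !dotvDl !dotvDr !dotvZl.
by rewrite (dotvC z x) (dotvC nu z); field.
Qed.

Lemma superjet_barrier (u : 'rV[R]_n -> R) x d : 0 < d ->
  (forall y, strip nu y -> enorm (y - x) < d -> u y - barrier y <= u x - barrier x) ->
  superjet (strip nu) u x (barrier_grad x) barrier_hess.
Proof.
move=> d0 xmax; split; first exact: barrier_hess_sym.
move=> e e0; exists d => // y sy xy.
have := xmax y sy xy; rewrite (barrier_taylor x y).
have : 0 <= e * enorm (y - x) ^+ 2 by rewrite mulr_ge0 ?sqr_ge0 // ltW.
lra.
Qed.

Lemma subjet_barrier (u : 'rV[R]_n -> R) x d : 0 < d ->
  (forall y, strip nu y -> enorm (y - x) < d -> - u y - barrier y <= - u x - barrier x) ->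
  subjet (strip nu) u x (- barrier_grad x) (- barrier_hess).
Proof.
move=> d0 xmax; split; first by rewrite linearN /= barrier_hess_sym.
move=> e e0; exists d => // y sy xy.
have := xmax y sy xy; rewrite (barrier_taylor x y) dotvNl qformN.
have : 0 <= e * enorm (y - x) ^+ 2 by rewrite mulr_ge0 ?sqr_ge0 // ltW.
lra.
Qed.

Hypothesis hnu : dotv nu nu = 1.

Lemma dotv_barrier_grad x :
  dotv (barrier_grad x) nu = c1 + al * dotv x nu + be * dotv x nu.
Proof. by rewrite /barrier_grad !dotvDl !dotvZl hnu; ring. Qed.

Lemma normr_qform_barrier_hess_le z :
  `|qform barrier_hess z| <= (`|al| + `|be|) * enorm z ^+ 2.
Proof.
rewrite qform_barrier_hess enorm_sq.
have h1 : dotv z nu ^+ 2 <= dotv z z by have := dotv_sqr_le z nu; rewrite hnu mulr1.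
have h2 := dotvv_ge0 z; have h3 : 0 <= dotv z nu ^+ 2 by rewrite sqr_ge0.
apply: le_trans (ler_normD _ _) _; rewrite !normrM (ger0_norm h2) -normrM -expr2.
by rewrite (ger0_norm h3) mulrDl lerD2l ler_wpM2l.
Qed.

Lemma barrier_continuous x e : 0 < e -> exists2 d, 0 < d &
  forall y, enorm (y - x) < d -> `|barrier y - barrier x| < e.
Proof.
move=> e0; set E := enorm (barrier_grad x); set A := `|al| + `|be|.
have E0 : 0 <= E by apply: enorm_ge0.
have A0 : 0 <= A by rewrite addr_ge0.
exists (Num.min 1 (e / (E + A + 1))).
  by rewrite lt_min ltr01 divr_gt0 // ltr_wpDl // addr_ge0.
move=> y; rewrite lt_min => /andP[r1 r2].
rewrite (barrier_taylor x y) addrAC [_ + dotv _ _]addrC addrK.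
set r := enorm (y - x).
have r0 : 0 <= r by apply: enorm_ge0.
have h1 := normr_dotv_le (barrier_grad x) (y - x).
have h2 := normr_qform_barrier_hess_le (y - x).
have h3 : r * (E + A + 1) < e by rewrite -ltr_pdivlMr // ltr_wpDl // addr_ge0.
apply: le_lt_trans (ler_normD _ _) _.
rewrite normrM ger0_norm ?invr_ge0 //.
rewrite -/r -/E -/A in h1 h2.
have h4 : r ^+ 2 <= r by rewrite expr2 ler_piMr // ltW.
have h5 : 0 <= 2^-1 :> R by rewrite invr_ge0.
have h6 : 2^-1 <= 1 :> R by rewrite invf_le1 // ler1n.
nra.
Qed.

Lemma cont_on_strip_subr_barrier (v : 'rV[R]_n -> R) :
  cont_on_strip nu v -> cont_on_strip nu (fun x => v x - barrier x).
Proof.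
move=> hv x sx e e0; have e2 : 0 < e / 2 by rewrite divr_gt0.
have [d1 d10 hd1] := hv x sx (e / 2) e2.
have [d2 d20 hd2] := barrier_continuous x e2.
exists (Num.min d1 d2); first by rewrite lt_min d10 d20.
move=> y sy; rewrite lt_min => /andP[y1 y2].
have := hd1 y sy y1; have := hd2 y y2.
have -> : v y - barrier y - (v x - barrier x) = (v y - v x) - (barrier y - barrier x).
  by ring.
by move=> a b; apply: le_lt_trans (ler_normB _ _) _; lra.
Qed.

End QuadraticBarrier.

Lemma barrier_hessN (R : realType) n (nu : 'rV[R]_n) al be :
  - barrier_hess nu al be = barrier_hess nu (- al) (- be).
Proof. by rewrite /barrier_hess opprD scaleNr raddfN. Qed.

Section StripTopology.
Local Open Scope classical_set_scope.
Variables (R : realType) (n : nat).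
Implicit Types z : 'rV[R]_n.

Lemma normr_coord_le_mx_norm z i : `|z 0 i| <= `|z|.
Proof.
rewrite [leRHS]/Num.norm /= mx_normrE; apply/bigmax_geP; right => /=.
by exists (0, i).
Qed.

Lemma normr_coord_le_enorm z i : `|z 0 i| <= enorm z.
Proof.
rewrite /enorm -(sqrtr_sqr (z 0 i)) ler_wsqrtr // dotvE.
rewrite (bigD1 i) //= -expr2 lerDl sumr_ge0 // => j _.
by rewrite -expr2 sqr_ge0.
Qed.

Lemma mx_norm_le_enorm z : `|z| <= enorm z.
Proof.
rewrite [leLHS]/Num.norm /= mx_normrE; apply: bigmax_le; first exact: enorm_ge0.
by move=> [i j] _; rewrite (ord1 i); apply: normr_coord_le_enorm.
Qed.

Lemma enorm_le_mx_norm z : enorm z <= n%:R * `|z|.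
Proof.
have h0 : 0 <= n%:R * `|z| by rewrite mulr_ge0.
rewrite -(ger0_norm h0) -(sqrtr_sqr (n%:R * `|z|)) ler_wsqrtr // dotvE.
apply: le_trans (_ : \sum_(i < n) `|z| ^+ 2 <= _).
  apply: ler_sum => i _; rewrite -expr2 -real_normK ?num_real //.
  by rewrite lerXn2r ?nnegrE ?normr_coord_le_mx_norm.
rewrite sumr_const card_ord exprMn mulrC -[X in X <= _]mulr_natr ler_wpM2l ?sqr_ge0 //.
case: (n) => [|k]; first by rewrite expr0n.
by rewrite expr2 ler_peMr // ler1n.
Qed.

Lemma enorm_lt_of_ball (x y : 'rV[R]_n) (d : R) :
  0 < d -> ball x (d / (n%:R + 1)) y -> enorm (y - x) < d.
Proof.
move=> d0; rewrite mx_norm_ball /ball_ /= => hy.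
apply: le_lt_trans (enorm_le_mx_norm _) _; rewrite -normrN opprB.
have n0 : 0 < n%:R + 1 :> R by rewrite ltr_wpDl.
move: hy; rewrite ltr_pdivlMr // => hy.
have := normr_ge0 (x - y); have : 0 <= n%:R :> R by [].
nra.
Qed.

Lemma within_continuous_enorm (A : set 'rV[R]_n) (h : 'rV[R]_n -> R) :
  (forall x, A x -> forall e, 0 < e -> exists2 d, 0 < d &
     forall y, A y -> enorm (y - x) < d -> `|h y - h x| < e) ->
  {within A, continuous h}.
Proof.
move=> hcont; apply/subspace_continuousP => x Ax; apply/cvgrPdist_lt => e e0.
have [d d0 hd] := hcont x Ax e e0.
rewrite near_withinE; apply/nbhs_ballP; exists (d / (n%:R + 1)) => /=.
  by rewrite divr_gt0 // ltr_wpDl.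
by move=> y /(enorm_lt_of_ball d0) xy Ay; rewrite distrC; apply: hd.
Qed.

Lemma continuous_enorm_delta (h : 'rV[R]_n -> R) :
  (forall x e, 0 < e -> exists2 d, 0 < d &
     forall y, enorm (y - x) < d -> `|h y - h x| < e) -> continuous h.
Proof.
move=> hcont x; apply/(@cvgrPdist_lt _ _ _ (nbhs x) (nbhs_filter x)) => e e0.
have [d d0 hd] := hcont x e e0.
apply/nbhs_ballP; exists (d / (n%:R + 1)) => /=; first by rewrite divr_gt0 // ltr_wpDl.
by move=> y /(enorm_lt_of_ball d0) xy; rewrite distrC; apply: hd.
Qed.

Lemma continuous_dotvl (nu : 'rV[R]_n) : continuous (fun x : 'rV[R]_n => dotv x nu).
Proof.
apply: continuous_enorm_delta => x e e0; exists (e / (enorm nu + 1)).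
  by rewrite divr_gt0 // ltr_wpDl // enorm_ge0.
move=> y xy; rewrite -dotvBl dotvC; apply: le_lt_trans (normr_dotv_le _ _) _.
have h1 := enorm_ge0 nu; have h2 := enorm_ge0 (y - x).
move: xy; rewrite ltr_pdivlMr ?ltr_wpDl // => xy; nra.
Qed.

Lemma continuous_enorm : continuous (@enorm R n).
Proof.
apply: continuous_enorm_delta => x e e0; exists e => // y xy.
apply: le_lt_trans xy; rewrite ler_norml; apply/andP; split.
  by have := enormD (x - y) y; rewrite subrK enormB; lra.
by have := enormD (y - x) x; rewrite subrK; lra.
Qed.

Lemma strip_ball_argmax (nu : 'rV[R]_n) (Rad : R) (w : 'rV[R]_n -> R) :
  0 <= Rad -> cont_on_strip nu w ->
  exists2 x0, strip nu x0 /\ enorm x0 <= Rad &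
    forall y, strip nu y -> enorm y <= Rad -> w y <= w x0.
Proof.
move=> R0 hw.
pose D := [set x : 'rV[R]_n | strip nu x /\ enorm x <= Rad].
have D0 : D !=set0.
  exists 0; split; last by rewrite /enorm dotv0l sqrtr0.
  by rewrite /strip dotv0l lexx andbT lerN10.
have cD : compact D.
  apply: bounded_closed_compact.
    rewrite /= /bounded_near; near=> M => x [_ hx].
    apply: le_trans (mx_norm_le_enorm x) (le_trans hx _).
    by near: M; apply: nbhs_pinfty_ge; rewrite num_real.
  have -> : D = ((fun x => dotv x nu) @^-1` [set r | -1 <= r]) `&`
      ((fun x => dotv x nu) @^-1` [set r | r <= 0]) `&`
      (@enorm R n @^-1` [set r | r <= Rad]).
    apply/seteqP; split => x /=; rewrite /strip; first by case=> /andP[? ?] ?.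
    by case=> [[? ?] ?]; split => //; apply/andP.
  apply: closedI; [apply: closedI|].
  - by apply: preimage_closed; [move=> x _; exact: continuous_dotvl|exact: closed_ge].
  - by apply: preimage_closed; [move=> x _; exact: continuous_dotvl|exact: closed_le].
  - by apply: preimage_closed; [move=> x _; exact: continuous_enorm|exact: closed_le].
have cw : {within D, continuous w}.
  apply: within_continuous_enorm => x [sx _] e e0.
  by have [d d0 hd] := hw x sx e e0; exists d => // y [sy _]; apply: hd.
have [c Dc cmax] := compact_EVT_max D0 cD cw.
move: Dc; rewrite inE => Dc; exists c => // y sy hy.
by apply: cmax; rewrite inE.
Unshelve. all: by end_near.
Qed.

End StripTopology.

Lemma strip_max_principle (R : realType) n (nu : 'rV[R]_n) (Rad : R)
    (w : 'rV[R]_n -> R) :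
  0 <= Rad -> cont_on_strip nu w ->
  (forall x, dotv x nu = -1 -> enorm x <= Rad -> w x <= 0) ->
  (forall x, strip nu x -> enorm x = Rad -> -1 < dotv x nu -> w x <= 0) ->
  (forall x, -1 < dotv x nu -> dotv x nu <= 0 -> enorm x < Rad ->
     forall d, 0 < d -> (forall y, strip nu y -> enorm (y - x) < d -> w y <= w x) ->
     w x <= 0) ->
  forall x, strip nu x -> enorm x <= Rad -> w x <= 0.
Proof.
move=> R0 hw hdir hsph hloc.
have [x0 [sx0 bx0] x0max] := strip_ball_argmax R0 hw.
suff w0 : w x0 <= 0 by move=> x sx bx; apply: le_trans (x0max x sx bx) w0.
move: (sx0) => /andP[t1 t2].
have [te|tne] := eqVneq (dotv x0 nu) (-1); first exact: hdir.
have t1' : -1 < dotv x0 nu by rewrite lt_def tne t1.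
have [re|rne] := eqVneq (enorm x0) Rad; first exact: hsph.
have r' : enorm x0 < Rad by rewrite lt_def eq_sym rne bx0.
apply: (hloc x0 t1' t2 r' (Rad - enorm x0)); first by rewrite subr_gt0.
move=> y sy hy; apply: x0max => //.
by have := enormD x0 (y - x0); rewrite addrC subrK; lra.
Qed.

Section PucciBarrier.
Variables (R : realType) (m : nat) (lam Lam : R) (nu : 'rV[R]_m.+1).
Hypotheses (hlam : 0 < lam) (hLam : 0 <= Lam) (hnu : dotv nu nu = 1).
Variables (delta C K : R).
Hypotheses (hdelta : 0 <= delta) (hC : 0 <= C) (hK : m%:R * Lam <= lam * K).

Let K_ge0 : 0 <= K.
Proof. by rewrite -(pmulr_rge0 _ hlam) (le_trans _ hK) ?mulr_ge0. Qed.

Definition pucci_barrier (mu : R) : 'rV[R]_m.+1 -> R :=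
  barrier nu (2 * (delta + mu) + C * (K + 1)) (delta + mu) (2 * C)
    (- (2 * C * (K + 1)) - 2 * mu).

Variables (Rad : R) (f g u : 'rV[R]_m.+1 -> R).
Hypotheses (hR : 1 <= Rad) (hcont : cont_on_strip nu u)
  (hvisc : visc_problem lam Lam nu Rad f g u)
  (hf : forall x, dotv x nu = -1 -> enorm x <= Rad -> `|f x| <= delta)
  (hg : forall x, dotv x nu = 0 -> enorm x <= Rad -> `|g x| <= delta)
  (hsph : forall x, strip nu x -> enorm x = Rad -> -1 < dotv x nu ->
     `|u x| <= C * Rad ^+ 2).

Let hdir x : dotv x nu = -1 -> enorm x <= Rad -> `|u x| <= delta.
Proof. by move=> t bx; have [_ [_ [_ [_ hD]]]] := hvisc; rewrite hD // hf. Qed.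

Section FixedMu.
Variables (mu : R).
Hypothesis hmu : 0 < mu.

Local Notation be := (- (2 * C * (K + 1)) - 2 * mu).
Local Notation hess := (barrier_hess nu (2 * C) be).
Local Notation grad := (barrier_grad nu (delta + mu) (2 * C) be).

Lemma pucci_barrierE x : pucci_barrier mu x =
  2 * (delta + mu) + C * (K + 1) + (delta + mu) * dotv x nu + C * dotv x x
  - (C * (K + 1) + mu) * dotv x nu ^+ 2.
Proof. by rewrite /pucci_barrier /barrier; field. Qed.

Let CK_ge : C * (m%:R * Lam) <= C * (lam * K).
Proof. exact: ler_wpM2l. Qed.

Lemma pucci_plus_pucci_barrier_lt0 : pucci_plus lam Lam hess < 0.
Proof.
have lm0 : 0 < lam * mu by rewrite mulr_gt0.
have CK0 : 0 <= C * K by rewrite mulr_ge0.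
rewrite pucci_plus_scalar_rank1 ?mulr_ge0 //; last by have := hmu; lra.
have -> : lam * (2 * C + be) = - (2 * (C * (lam * K))) - 2 * (lam * mu) by ring.
by have := CK_ge; lra.
Qed.

Lemma pucci_minus_pucci_barrier_gt0 : 0 < pucci_minus lam Lam (- hess).
Proof.
have lm0 : 0 < lam * mu by rewrite mulr_gt0.
have CK0 : 0 <= C * K by rewrite mulr_ge0.
rewrite barrier_hessN pucci_minus_scalar_rank1 ?oppr_le0 ?mulr_ge0 //;
  last by have := hmu; lra.
have -> : lam * (- (2 * C) + - be) = 2 * (C * (lam * K)) + 2 * (lam * mu) by ring.
by have := CK_ge; lra.
Qed.

Lemma dotv_grad_pucci_barrier x : dotv x nu = 0 -> dotv (grad x) nu = delta + mu.
Proof. by move=> t0; rewrite dotv_barrier_grad // t0 !mulr0 !addr0. Qed.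

Lemma pucci_barrier_ge_delta x : dotv x nu = -1 -> delta <= pucci_barrier mu x.
Proof. by move=> t; rewrite pucci_barrierE t; have := mulr_ge0 hC (dotvv_ge0 x); lra. Qed.

Lemma pucci_barrier_ge_sphere x : strip nu x -> C * dotv x x <= pucci_barrier mu x.
Proof.
move=> /andP[t1 t2]; rewrite pucci_barrierE; set t := dotv x nu in t1 t2 *.
have tt : t ^+ 2 <= 1 by nra.
have h1 : 0 <= C * (K + 1) * (1 - t ^+ 2) by rewrite !mulr_ge0 ?subr_ge0 // addr_ge0.
have h2 : mu * t ^+ 2 <= mu by rewrite ler_piMr // ltW.
have h3 : 0 <= delta * (1 + t) by rewrite mulr_ge0 //; lra.
have h4 : 0 <= mu * (1 + t) by rewrite mulr_ge0 ?(ltW hmu) //; lra.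
by have := hdelta; lra.
Qed.

Lemma pucci_barrier_le x : strip nu x -> dotv x x <= 1 ->
  pucci_barrier mu x <= 2 * (delta + mu) + C * (K + 2).
Proof.
move=> /andP[t1 t2] xx; rewrite pucci_barrierE.
have a1 : (delta + mu) * dotv x nu <= 0 by rewrite mulr_ge0_le0 // addr_ge0 // ltW.
have a2 : C * dotv x x <= C by rewrite ler_piMr.
have a3 : 0 <= (C * (K + 1) + mu) * dotv x nu ^+ 2.
  by rewrite mulr_ge0 ?sqr_ge0 // addr_ge0 ?(ltW hmu) // mulr_ge0 // addr_ge0.
lra.
Qed.

Lemma u_le_pucci_barrier x : strip nu x -> enorm x <= Rad -> u x <= pucci_barrier mu x.
Proof.
have [hsub [_ [hneu _]]] := hvisc.
move=> sx bx; rewrite -subr_le0; move: x sx bx.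
apply: strip_max_principle; first exact: le_trans ler01 hR.
- exact: cont_on_strip_subr_barrier.
- move=> x t bx; have := hdir t bx; have := pucci_barrier_ge_delta t.
  by have := ler_norm (u x); lra.
- move=> x sx rx t1; rewrite subr_le0.
  apply: le_trans (le_trans (ler_norm _) (hsph sx rx t1)) _.
  by rewrite -rx enorm_sq pucci_barrier_ge_sphere.
move=> x t1 t2 rx d d0 xmax.
have sj : superjet (strip nu) u x (grad x) hess.
  exact: superjet_barrier d0 xmax.
move: t2; rewrite le_eqVlt => /orP[/eqP t0|tn].
  have := hneu x _ _ t0 rx sj.
  rewrite dotv_grad_pucci_barrier // ge_min.
  have := pucci_plus_pucci_barrier_lt0; have := hg t0 (ltW rx).
  by have := ler_norm (g x); have := hmu; move=> ? ? ? ? /orP[]; lra.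
have := hsub x _ _ _ rx sj; rewrite t1 tn => /(_ isT).
by have := pucci_plus_pucci_barrier_lt0; lra.
Qed.

Lemma oppr_u_le_pucci_barrier x : strip nu x -> enorm x <= Rad ->
  - u x <= pucci_barrier mu x.
Proof.
have [_ [hsup [_ [hneu _]]]] := hvisc.
move=> sx bx; rewrite -subr_le0; move: x sx bx.
apply: (strip_max_principle (w := fun x => - u x - pucci_barrier mu x)).
  exact: le_trans ler01 hR.
- apply: cont_on_strip_subr_barrier => //.
  move=> x sx e e0; have [d d0 hd] := hcont sx e0.
  by exists d => // y sy xy; rewrite -opprD normrN; apply: hd.
- move=> x t bx; have := hdir t bx; have := pucci_barrier_ge_delta t.
  by have := ler_norm (- u x); rewrite normrN; lra.
- move=> x sx rx t1; rewrite subr_le0.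
  apply: le_trans (le_trans (ler_norm _) _) _; first by rewrite normrN; apply: hsph.
  by rewrite -rx enorm_sq pucci_barrier_ge_sphere.
move=> x t1 t2 rx d d0 xmax.
have sj : subjet (strip nu) u x (- grad x) (- hess).
  exact: subjet_barrier d0 xmax.
move: t2; rewrite le_eqVlt => /orP[/eqP t0|tn].
  have := hneu x _ _ t0 rx sj.
  rewrite dotvNl dotv_grad_pucci_barrier // le_max.
  have := pucci_minus_pucci_barrier_gt0; have := hg t0 (ltW rx).
  by have := ler_norm (- g x); rewrite normrN; have := hmu; move=> ? ? ? ? /orP[]; lra.
have := hsup x _ _ _ rx sj; rewrite t1 tn => /(_ isT).
by have := pucci_minus_pucci_barrier_gt0; lra.
Qed.

End FixedMu.

Lemma abs_le_pucci_bound x : strip nu x -> enorm x <= 1 ->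
  `|u x| <= 2 * delta + C * (K + 2).
Proof.
move=> sx x1; have xR := le_trans x1 hR.
have xx : dotv x x <= 1 by rewrite -enorm_sq expr2 mulr_ile1 ?enorm_ge0.
apply/ler_addgt0Pr => e e0; have e2 : 0 < e / 2 by rewrite divr_gt0.
have := pucci_barrier_le e2 sx xx.
have := u_le_pucci_barrier e2 sx xR; have := oppr_u_le_pucci_barrier e2 sx xR.
by rewrite ler_norml; lra.
Qed.

End PucciBarrier.

Lemma dotv_sqr_rV1 (R : realType) (x y : 'rV[R]_1) :
  dotv x y ^+ 2 = dotv x x * dotv y y.
Proof. by rewrite !dotvE !big_ord1; ring. Qed.

Theorem lemma2p9 (R : realType) (n : nat) (lam Lam : R)
  (hlam : 0 < lam) (hLam : lam < Lam)
  (nu : 'rV[R]_n) (hnu : enorm nu = 1)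
  (Rad eps delta : R) (hR : 1 <= Rad) (heps : 0 < eps)
  (f g u : 'rV[R]_n -> R)
  (hcont : cont_on_strip nu u)
  (hvisc : visc_problem lam Lam nu Rad f g u)
  (hbd : forall x, strip nu x -> enorm x = Rad -> `|u x| <= Rad `^ (2 - eps))
  (hf : forall x, dotv x nu = -1 -> enorm x <= Rad -> `|f x| <= delta)
  (hg : forall x, dotv x nu = 0 -> enorm x <= Rad -> `|g x| <= delta) :
  forall x, strip nu x -> enorm x <= 1 ->
    `|u x| <= 2 * delta + 16%:R * (n - 1)%:R * (Lam / lam) * Rad `^ (- eps).
Proof.
have hnu2 : dotv nu nu = 1 by rewrite -enorm_sq hnu expr1n.
case: n => [|m] in nu hnu hnu2 f g u hcont hvisc hbd hf hg *.
  by move: hnu2; rewrite dotvE big_ord0 => /eqP; rewrite eq_sym oner_eq0.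
have hdelta : 0 <= delta.
  by apply: le_trans (normr_ge0 _) (hf (- nu) _ _); rewrite ?dotvNl ?hnu2 ?enormN ?hnu.
have r1 : 1 <= Lam / lam by rewrite ler_pdivlMr // mul1r ltW.
have hK : m%:R * Lam <= lam * (m%:R * (Lam / lam)).
  by rewrite mulrCA [lam * _]mulrCA mulfV ?gt_eqF // mulr1.
have [C [hC hsph hCK]] : exists C, [/\ 0 <= C,
    forall x, strip nu x -> enorm x = Rad -> -1 < dotv x nu -> `|u x| <= C * Rad ^+ 2 &
    C * (m%:R * (Lam / lam) + 2) <= 16%:R * m%:R * (Lam / lam) * Rad `^ (- eps)].
  have [m0|m_gt0] := posnP m.
    exists 0; split; rewrite ?mul0r ?m0 ?mulr0 ?mul0r // => x /andP[_ t0] rx t1.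
    exfalso; subst m.
    have := dotv_sqr_rV1 x nu; rewrite hnu2 mulr1 -enorm_sq rx.
    have : 1 <= Rad ^+ 2 by rewrite expr_ge1 // (le_trans ler01).
    by nra.
  exists (Rad `^ (- eps)); split; first exact: powR_ge0.
    move=> x sx rx t1; apply: le_trans (hbd x sx rx) _.
    have R0 : 0 < Rad by apply: lt_le_trans hR.
    rewrite -(powR_mulrn _ (ltW R0)) -powRD ?(gt_eqF R0) ?implybT //.
    by rewrite addrC.
  have N1 : 1 <= m%:R * (Lam / lam) by rewrite mulr_ege1 // ler1n.
  have := powR_ge0 Rad (- eps); set P := Rad `^ (- eps); nra.
move=> x sx x1; rewrite subn1 /=.
have hLam0 : 0 <= Lam by rewrite (le_trans (ltW hlam)) ?ltW.
apply: le_trans (abs_le_pucci_bound hlam hLam0 hnu2 hdelta hC hK hR hcont hvisc hf hg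
  hsph sx x1) _.
by rewrite lerD2l.
Qed.
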